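(* Let $\mathbf{b}\in H_{1,2,2}$ have odd norm. Then there is exactly one unit $\mathbf{u}$ of $H_{1,2,2}$ such that $\mathbf{b}\mathbf{u}$ is primary, and exactly one unit $\mathbf{u}'$ of $H_{1,2,2}$ such that $\mathbf{u}'\mathbf{b}$ is primary.
   Context: Let $\mathbf{i},\mathbf{j},\mathbf{k}$ be the standard quaternion units; $\overline{\mathbf{q}}$ is quaternion conjugation and $N(\mathbf{q})=\mathbf{q}\overline{\mathbf{q}}$. $H_{1,2,2}$ is the subring of the quaternions equal to the $\mathbb{Z}$-module generated by $\mathbf{v}_1=1$, $\mathbf{v}_2=\mathbf{i}$, $\mathbf{v}_3=\tfrac12(1+\mathbf{i}+\sqrt2\,\mathbf{j})$, $\mathbf{v}_4=\tfrac12(1+\mathbf{i}+\sqrt2\,\mathbf{k})$; it has 24 units (elements of norm 1). Let $I = 2(1+\mathbf{i})H_{1,2,2}$ (equal to $H_{1,2,2}\,2(1+\mathbf{i})$). An element $\mathbf{q}\in H_{1,2,2}$ is primary if $\mathbf{q}-1\in I$ or $\mathbf{q}-(1+2\mathbf{v}_3)\in I$. *)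

From HB Require Import structures.
From mathcomp Require Import all_boot all_order all_algebra.
Set Implicit Arguments. Unset Strict Implicit. Unset Printing Implicit Defensive.
Import Order.TTheory GRing.Theory Num.Theory.
Local Open Scope ring_scope.

Record quat (R : rcfType) := Quat { q0 : R; q1 : R; q2 : R; q3 : R }.

Section Quat.
Variable R : rcfType.
Implicit Types a b q : quat R.

Definition qadd a b := Quat (q0 a + q0 b) (q1 a + q1 b) (q2 a + q2 b) (q3 a + q3 b).
Definition qopp a := Quat (- q0 a) (- q1 a) (- q2 a) (- q3 a).
Definition qsub a b := qadd a (qopp b).
(* Hamilton product: i^2 = j^2 = k^2 = ijk = -1 *)
Definition qmul a b := Quat
  (q0 a * q0 b - q1 a * q1 b - q2 a * q2 b - q3 a * q3 b)
  (q0 a * q1 b + q1 a * q0 b + q2 a * q3 b - q3 a * q2 b)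
  (q0 a * q2 b - q1 a * q3 b + q2 a * q0 b + q3 a * q1 b)
  (q0 a * q3 b + q1 a * q2 b - q2 a * q1 b + q3 a * q0 b).
Definition qconj a := Quat (q0 a) (- q1 a) (- q2 a) (- q3 a).
Definition qN q := qmul q (qconj q).
Definition qreal (r : R) := Quat r 0 0 0.
Definition qzscale (z : int) q := Quat (z%:~R * q0 q) (z%:~R * q1 q) (z%:~R * q2 q) (z%:~R * q3 q).

Definition q1e : quat R := qreal 1.
Definition qi : quat R := Quat 0 1 0 0.
Definition v1 : quat R := q1e.
Definition v2 : quat R := qi.
Definition v3 : quat R := Quat (1/2) (1/2) (Num.sqrt 2 / 2) 0.
Definition v4 : quat R := Quat (1/2) (1/2) 0 (Num.sqrt 2 / 2).

Definition inH q : Prop := exists a1 a2 a3 a4 : int,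
  q = qadd (qadd (qzscale a1 v1) (qzscale a2 v2)) (qadd (qzscale a3 v3) (qzscale a4 v4)).

Definition unitH u : Prop := inH u /\ qN u = q1e.

Definition gen2 : quat R := qmul (qreal 2) (qadd q1e qi).
Definition inI q : Prop := exists h, inH h /\ q = qmul gen2 h.

Definition primary q : Prop :=
  inH q /\ (inI (qsub q q1e) \/ inI (qsub q (qadd q1e (qmul (qreal 2) v3)))).

Definition odd_norm b : Prop := exists n : int, odd `|n|%N /\ qN b = qreal n%:~R.
End Quat.

From mathcomp Require Import all_boot all_order all_algebra.
From mathcomp Require Import ring zify.
Set Implicit Arguments. Unset Strict Implicit. Unset Printing Implicit Defensive.
Import Order.TTheory GRing.Theory Num.Theory.
Local Open Scope ring_scope.

(* In the Z-basis v1, ..., v4 of H_{1,2,2} the product and the norm become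
   integral bilinear and quadratic forms on Z^4.  Since 4 = 2(1+i)(1-i) lies
   in I, whether b u or u b is primary, and the parity of N(b), depend only on
   b modulo 4 H_{1,2,2}.  The norm form is positive definite, so the 24 units
   have small coordinates, and the theorem reduces to a finite check over the
   4^4 residues of odd norm. *)

(* (a1, a2, a3, a4) stands for a1 v1 + a2 v2 + a3 v3 + a4 v4 (see quat_of);
   cmul is read off from the multiplication table of the v_i. *)
Definition coord := (int * int * int * int)%type.

Definition cadd (a b : coord) : coord :=
  let: (a1, a2, a3, a4) := a in let: (b1, b2, b3, b4) := b in
  (a1 + b1, a2 + b2, a3 + b3, a4 + b4).

Definition csub (a b : coord) : coord :=
  let: (a1, a2, a3, a4) := a in let: (b1, b2, b3, b4) := b in
  (a1 - b1, a2 - b2, a3 - b3, a4 - b4).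

Definition cscale (k : int) (a : coord) : coord :=
  let: (a1, a2, a3, a4) := a in (k * a1, k * a2, k * a3, k * a4).

Definition cmul (a b : coord) : coord :=
  let: (a1, a2, a3, a4) := a in let: (b1, b2, b3, b4) := b in
  (a1 * b1 - a2 * b2 - a2 * b3 - a3 * b3 - a4 * b2 - a4 * b3 - a4 * b4,
   a1 * b2 + a2 * b1 + a2 * b4 + a3 * b2 + a3 * b4 - a4 * b3,
   a1 * b3 - a2 * b4 + a3 * b1 + a3 * b3 + a4 * b2 + a4 * b3,
   a1 * b4 + a2 * b3 - a3 * b2 + a4 * b1 + a4 * b3 + a4 * b4).

Definition cnorm (a : coord) : int :=
  let: (a1, a2, a3, a4) := a in
  a1 * a1 + a2 * a2 + (a1 + a2) * (a3 + a4) + a3 * a3 + a4 * a4 + a3 * a4.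

Definition cideal (x : coord) : bool :=
  let: (x1, x2, x3, x4) := x in
  [&& (2 %| x1)%Z, (2 %| x2)%Z, (2 %| x3)%Z, (2 %| x4)%Z,
      (4 %| x3 - x4)%Z & (4 %| x1 + x2 + x3)%Z].

Definition cone : coord := (1, 0, 0, 0).
Definition cone2v3 : coord := (1, 0, 2, 0).
Definition cgen : coord := (2, 2, 0, 0).

Definition cprimary (x : coord) : bool :=
  cideal (csub x cone) || cideal (csub x cone2v3).

Lemma cidealP x : reflect (exists h, x = cmul cgen h) (cideal x).
Proof.
apply: (iffP idP); case: x => [[[x1 x2] x3] x4] /=.
- case/and5P => /dvdzP[q1 e1] /dvdzP[q2 e2] /dvdzP[q3 e3] /dvdzP[q4 e4]
                /andP[/dvdzP[k ek] /dvdzP[m em]].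
  by exists (m, q2 - m + k, q4 + k, - k) => /=; congr (_, _, _, _); lia.
- case=> [[[[h1 h2] h3] h4] [-> -> -> ->]].
  repeat (apply/andP; split); apply/dvdzP.
  + by exists (h1 - h2 - h3); ring.
  + by exists (h1 + h2 + h4); ring.
  + by exists (h3 - h4); ring.
  + by exists (h3 + h4); ring.
  + by exists (- h4); ring.
  + by exists h1; ring.
Qed.

Lemma cideal_shift x z : cideal (cadd x (cscale 4 z)) = cideal x.
Proof.
case: x z => [[[x1 x2] x3] x4] [[[z1 z2] z3] z4] /=.
have -> : x3 + 4 * z3 - (x4 + 4 * z4) = x3 - x4 + 4 * (z3 - z4) by ring.
have -> : x1 + 4 * z1 + (x2 + 4 * z2) + (x3 + 4 * z3) = x1 + x2 + x3 + 4 * (z1 + z2 + z3)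
  by ring.
have shift d y z : (d %| 4)%Z -> (d %| y + 4 * z)%Z = (d %| y)%Z.
  by move=> d4; rewrite rpredDr // dvdz_mulr.
by rewrite !shift.
Qed.

Lemma cprimary_shift x z : cprimary (cadd x (cscale 4 z)) = cprimary x.
Proof.
have csubDl e : csub (cadd x (cscale 4 z)) e = cadd (csub x e) (cscale 4 z).
  by case: x z e => [[[? ?] ?] ?] [[[? ?] ?] ?] [[[? ?] ?] ?] /=; congr (_, _, _, _); ring.
by rewrite /cprimary !csubDl !cideal_shift.
Qed.

Lemma cmul_shiftl k a g u :
  cmul (cadd a (cscale k g)) u = cadd (cmul a u) (cscale k (cmul g u)).
Proof.
by case: a g u => [[[? ?] ?] ?] [[[? ?] ?] ?] [[[? ?] ?] ?] /=; congr (_, _, _, _); ring.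
Qed.

Lemma cmul_shiftr k a g u :
  cmul u (cadd a (cscale k g)) = cadd (cmul u a) (cscale k (cmul u g)).
Proof.
by case: a g u => [[[? ?] ?] ?] [[[? ?] ?] ?] [[[? ?] ?] ?] /=; congr (_, _, _, _); ring.
Qed.

Lemma cnorm_shift_even a g : (2 %| cnorm (cadd a (cscale 4 g)))%Z = (2 %| cnorm a)%Z.
Proof.
have -> : cnorm (cadd a (cscale 4 g))
          = cnorm a + (4 * (cnorm (cadd a g) - cnorm a - cnorm g) + 16 * cnorm g).
  by case: a g => [[[? ?] ?] ?] [[[? ?] ?] ?] /=; ring.
by rewrite rpredDr // rpredD // dvdz_mulr.
Qed.

Definition cmod4 (a : coord) : coord :=
  let: (a1, a2, a3, a4) := a in ((a1 %% 4)%Z, (a2 %% 4)%Z, (a3 %% 4)%Z, (a4 %% 4)%Z).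

Definition cdiv4 (a : coord) : coord :=
  let: (a1, a2, a3, a4) := a in ((a1 %/ 4)%Z, (a2 %/ 4)%Z, (a3 %/ 4)%Z, (a4 %/ 4)%Z).

Lemma cdivmod4 a : a = cadd (cmod4 a) (cscale 4 (cdiv4 a)).
Proof.
by case: a => [[[a1 a2] a3] a4] /=; rewrite !(addrC (_ %% 4)%Z) !(mulrC 4) -!divz_eq.
Qed.

Definition grid (s t : seq int) : seq coord :=
  [seq (xy.1, xy.2, zw.1, zw.2) | xy <- [seq (x, y) | x <- s, y <- s],
                                  zw <- [seq (z, w) | z <- t, w <- t]].

Lemma mem_grid s t a1 a2 a3 a4 :
  a1 \in s -> a2 \in s -> a3 \in t -> a4 \in t -> (a1, a2, a3, a4) \in grid s t.
Proof.
by move=> *; apply/allpairsP; exists ((a1, a2), (a3, a4)); split=> //; apply: allpairs_f.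
Qed.

Definition zrange (m : int) (n : nat) : seq int := [seq m + i%:Z | i <- iota 0 n].

Lemma mem_zrange m n x : m <= x < m + n%:Z -> x \in zrange m n.
Proof.
move=> /andP[mx xn]; apply/mapP; exists `|x - m|%N; last by lia.
by rewrite mem_iota; lia.
Qed.

Lemma cmod4_grid a : cmod4 a \in grid (zrange 0 4) (zrange 0 4).
Proof.
have mod4 x : (x %% 4)%Z \in zrange 0 4.
  by apply: mem_zrange; rewrite add0r modz_ge0 ?ltz_pmod.
by case: a => [[[a1 a2] a3] a4]; apply: mem_grid.
Qed.

Definition cunits : seq coord :=
  [seq a <- grid (zrange (-2) 5) (zrange (-1) 3) | cnorm a == 1].

Lemma sqr_lt_bound (x n : int) : 0 <= n -> x * x < (n + 1) * (n + 1) -> -n <= x <= n.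
Proof. by move=> n_ge0 lt_sq; apply/andP; split; nia. Qed.

Lemma cnorm_eq1_bound a1 a2 a3 a4 : cnorm (a1, a2, a3, a4) = 1 ->
  [/\ -2 <= a1 <= 2, -2 <= a2 <= 2, -1 <= a3 <= 1 & -1 <= a4 <= 1].
Proof.
move=> norm1.
have sum_sq : (2 * a1 + a3 + a4) ^+ 2 + (2 * a2 + a3 + a4) ^+ 2 + 2 * a3 ^+ 2 + 2 * a4 ^+ 2
              = 4 * cnorm (a1, a2, a3, a4) by rewrite /=; ring.
rewrite norm1 mulr1 in sum_sq.
have := sqr_ge0 (2 * a1 + a3 + a4); have := sqr_ge0 (2 * a2 + a3 + a4).
have := sqr_ge0 a3; have := sqr_ge0 a4.
rewrite !expr2 in sum_sq * => ? ? ? ?.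
have /andP[? ?] : -1 <= a3 <= 1 by apply: sqr_lt_bound; lia.
have /andP[? ?] : -1 <= a4 <= 1 by apply: sqr_lt_bound; lia.
have /andP[? ?] : -2 <= 2 * a1 + a3 + a4 <= 2 by apply: sqr_lt_bound; lia.
have /andP[? ?] : -2 <= 2 * a2 + a3 + a4 <= 2 by apply: sqr_lt_bound; lia.
by split; apply/andP; split; lia.
Qed.

Lemma cnorm_eq1_cunits a : cnorm a = 1 -> a \in cunits.
Proof.
case: a => [[[a1 a2] a3] a4] norm1; rewrite mem_filter norm1 eqxx.
by have [*] := cnorm_eq1_bound norm1; apply: mem_grid; apply: mem_zrange.
Qed.

Definition unique_primary_unit (r : coord) : bool :=
  (count (fun u => cprimary (cmul r u)) cunits == 1%N) &&
  (count (fun u => cprimary (cmul u r)) cunits == 1%N).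

Lemma unique_primary_unit_mod4 :
  all (fun r => (2 %| cnorm r)%Z || unique_primary_unit r) (grid (zrange 0 4) (zrange 0 4)).
Proof. by vm_compute. Qed.

Lemma count_eq1P (T : eqType) (p : pred T) s :
  count p s = 1%N -> exists x, [/\ x \in s, p x & {in s, forall y, p y -> y = x}].
Proof.
rewrite -size_filter; case def_ps: (filter p s) => [|x [|? ?]] // _.
have : x \in filter p s by rewrite def_ps mem_head.
rewrite mem_filter => /andP[px xs]; exists x; split=> // y ys py.
have : y \in filter p s by rewrite mem_filter py.
by rewrite def_ps inE => /eqP.
Qed.

Section Quaternions.
Variable R : rcfType.

Definition quat_of (a : coord) : quat R :=
  let: (a1, a2, a3, a4) := a in
  qadd (qadd (qzscale a1 (v1 R)) (qzscale a2 (v2 R)))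
       (qadd (qzscale a3 (v3 R)) (qzscale a4 (v4 R))).

Local Notation sqrt2_half := (Num.sqrt 2 / 2 : R).

Lemma sqr_sqrt2_half : sqrt2_half * sqrt2_half = 1 / 2.
Proof.
rewrite mulrACA -expr2 sqr_sqrtr ?ler0n //.
by field; rewrite ?pnatr_eq0.
Qed.

Lemma sqrt2_half_neq0 : sqrt2_half != 0.
Proof. by rewrite mulf_neq0 ?invr_eq0 ?pnatr_eq0 // gt_eqF // sqrtr_gt0 ltr0n. Qed.

Lemma quat_ofE a1 a2 a3 a4 : quat_of (a1, a2, a3, a4) =
  Quat (a1%:~R + (a3%:~R + a4%:~R) / 2) (a2%:~R + (a3%:~R + a4%:~R) / 2)
       (a3%:~R * sqrt2_half) (a4%:~R * sqrt2_half).
Proof. by rewrite /quat_of /qadd /qzscale /=; congr Quat; field; rewrite ?pnatr_eq0. Qed.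

Lemma qmul_jk_scaled (A B C D A' B' C' D' t : R) : t * t = 1 / 2 ->
  qmul (Quat A B (C * t) (D * t)) (Quat A' B' (C' * t) (D' * t)) =
  Quat (A * A' - B * B' - C * C' / 2 - D * D' / 2) (A * B' + B * A' + C * D' / 2 - D * C' / 2)
       ((A * C' - B * D' + C * A' + D * B') * t) ((A * D' + B * C' - C * B' + D * A') * t).
Proof.
move=> tt; rewrite /qmul /=; congr Quat; last 2 first; [ring | ring | |].
- transitivity (A * A' - B * B' - C * C' * (t * t) - D * D' * (t * t)); first ring.
  by rewrite tt; field; rewrite ?pnatr_eq0.
- transitivity (A * B' + B * A' + C * D' * (t * t) - D * C' * (t * t)); first ring.
  by rewrite tt; field; rewrite ?pnatr_eq0.
Qed.

Lemma quat_of_mul a b : qmul (quat_of a) (quat_of b) = quat_of (cmul a b).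
Proof.
case: a b => [[[a1 a2] a3] a4] [[[b1 b2] b3] b4].
rewrite !quat_ofE qmul_jk_scaled ?sqr_sqrt2_half // !(intrD, intrB, intrM).
by congr Quat; field; rewrite ?pnatr_eq0.
Qed.

Lemma quat_of_norm a : qN (quat_of a) = qreal (cnorm a)%:~R.
Proof.
case: a => [[[a1 a2] a3] a4].
rewrite /qN quat_ofE /qconj /= -!mulNr qmul_jk_scaled ?sqr_sqrt2_half // !(intrD, intrM).
by rewrite /qreal; congr Quat; field; rewrite ?pnatr_eq0.
Qed.

Lemma quat_of_sub a b : qsub (quat_of a) (quat_of b) = quat_of (csub a b).
Proof.
case: a b => [[[a1 a2] a3] a4] [[[b1 b2] b3] b4].
rewrite /qsub /qadd /qopp !quat_ofE /= !intrB.
by congr Quat; field; rewrite ?pnatr_eq0.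
Qed.

Lemma quat_of_inj : injective quat_of.
Proof.
case=> [[[a1 a2] a3] a4] [[[b1 b2] b3] b4]; rewrite !quat_ofE => -[e1 e2 e3 e4].
have ea3 : a3 = b3 by apply: (@intr_inj R); apply: (mulIf sqrt2_half_neq0).
have ea4 : a4 = b4 by apply: (@intr_inj R); apply: (mulIf sqrt2_half_neq0).
subst b3 b4.
by move/addIr/intr_inj: e1 => ->; move/addIr/intr_inj: e2 => ->.
Qed.

Lemma inHP q : inH q <-> exists a, q = quat_of a.
Proof.
split; first by case=> a1 [a2 [a3 [a4 ->]]]; exists (a1, a2, a3, a4).
by case=> [[[[a1 a2] a3] a4] ->]; exists a1, a2, a3, a4.
Qed.

Lemma quat_of_cone : q1e R = quat_of cone.
Proof. by rewrite quat_ofE /q1e /qreal; congr Quat; field; rewrite ?pnatr_eq0. Qed.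

Lemma quat_of_cone2v3 : qadd (q1e R) (qmul (qreal 2) (v3 R)) = quat_of cone2v3.
Proof.
rewrite quat_ofE /q1e /qreal /qadd /qmul /v3 /=.
by congr Quat; field; rewrite ?pnatr_eq0.
Qed.

Lemma quat_of_cgen : gen2 R = quat_of cgen.
Proof.
rewrite quat_ofE /gen2 /q1e /qi /qreal /qadd /qmul /=.
by congr Quat; field; rewrite ?pnatr_eq0.
Qed.

Lemma inI_quat_of x : inI (quat_of x) <-> cideal x.
Proof.
rewrite /inI quat_of_cgen; split.
- case=> h [/inHP[a ->]]; rewrite quat_of_mul => /quat_of_inj ->.
  by apply/cidealP; exists a.
- case/cidealP=> a ->; exists (quat_of a); split; first by apply/inHP; exists a.
  by rewrite quat_of_mul.
Qed.

Lemma primary_quat_of x : primary (quat_of x) <-> cprimary x.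
Proof.
rewrite /primary /cprimary quat_of_cone2v3 quat_of_cone !quat_of_sub !inI_quat_of.
split; first by case=> _ [] ->; rewrite ?orbT.
by move=> prim_x; split; [apply/inHP; exists x | apply/orP].
Qed.

Lemma unitH_quat_of u : unitH u <-> exists2 a, a \in cunits & u = quat_of a.
Proof.
split.
- case=> /inHP[a ->]; rewrite quat_of_norm /q1e /qreal => -[norm1].
  by exists a => //; apply: cnorm_eq1_cunits; apply: (@intr_inj R).
- case=> a; rewrite mem_filter => /andP[/eqP norm1 _] ->.
  by split; [apply/inHP; exists a | rewrite quat_of_norm norm1].
Qed.

Lemma exists_unique_unit (P : quat R -> Prop) (p : pred coord) :
  (forall a, P (quat_of a) <-> p a) -> count p cunits = 1%N ->
  exists! u, unitH u /\ P u.
Proof.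
move=> Pp /count_eq1P[a [a_unit pa a_uniq]].
exists (quat_of a); split; first by split; [apply/unitH_quat_of; exists a | apply/Pp].
by move=> _ [/unitH_quat_of[b b_unit ->] /Pp pb]; rewrite (a_uniq b).
Qed.
End Quaternions.

Theorem lemma15 (R : rcfType) (b : quat R) :
  inH b -> odd_norm b ->
  (exists! u : quat R, unitH u /\ primary (qmul b u)) /\
  (exists! u' : quat R, unitH u' /\ primary (qmul u' b)).
Proof.
move=> /inHP[a ->] [n [odd_n]]; rewrite quat_of_norm => -[/(@intr_inj R) norm_a].
set r := cmod4 a; have def_a : a = cadd r (cscale 4 (cdiv4 a)) := cdivmod4 a.
have odd_r : ~~ (2 %| cnorm r)%Z.
  by rewrite -(cnorm_shift_even r (cdiv4 a)) -def_a norm_a dvdzE dvdn2 negbK.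
have := allP unique_primary_unit_mod4 r (cmod4_grid a).
rewrite (negbTE odd_r) => /andP[/eqP unique_right /eqP unique_left].
split.
- apply: exists_unique_unit unique_right => u.
  by rewrite quat_of_mul primary_quat_of def_a cmul_shiftl cprimary_shift.
- apply: exists_unique_unit unique_left => u.
  by rewrite quat_of_mul primary_quat_of def_a cmul_shiftr cprimary_shift.
Qed.
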